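(* Let $G$ be a group generated by a set $X$, let $H$ be a normal subgroup of $G$, and let $\bar G=G/H$ with generating set $\bar X$ the image of $X$. Then $$\mathrm{pw}(\bar G,\bar X)\le \mathrm{pw}(G,X)\le \mathrm{pw}(\bar G,\bar X)+\mathrm{pw}(H,X).$$
   Context: A palindrome in a group generated by a set $X$ is an element represented by a reduced word in $X^{\pm1}$ reading the same forwards and backwards; $l_{\mathcal P}(g)$ is the minimal number of palindromes (in $X^{\pm1}$) whose product is $g$; $\mathrm{pw}(G,X)=\sup_{g\in G}l_{\mathcal P}(g)$. For a subgroup $H\le G$, $\mathrm{pw}(H,X)=\sup_{h\in H} l_{\mathcal P}(h)$, where palindromes are taken in $G$ with respect to the alphabet $X^{\pm1}$. *)

From HB Require Import structures.
From mathcomp Require Import all_boot ssralg monoid.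
From mathcomp Require Import all_classical reals constructive_ereal ereal.
From mathcomp Require Import Rstruct.

Set Implicit Arguments.
Unset Strict Implicit.
Unset Printing Implicit Defensive.

Local Open Scope classical_set_scope.

Section Palindromes.
Variable G : groupType.
Local Open Scope group_scope.

(* A letter of the alphabet X^{+-1}: (x, false) stands for x, (x, true) for x^-1. *)
Definition letter := (G * bool)%type.

Definition letter_val (l : letter) : G := if l.2 then l.1^-1 else l.1.

Definition word_val (w : seq letter) : G := foldr (fun l acc => letter_val l * acc) 1 w.

Definition word_on (X : set G) (w : seq letter) : Prop := forall l, l \in w -> X l.1.

(* freely reduced: no two consecutive letters x^e x^{-e} *)
Definition reduced_word (w : seq letter) : bool :=
  sorted (fun a b : letter => ~~ ((a.1 == b.1) && (a.2 != b.2))) w.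

Definition generates (X : set G) : Prop :=
  forall g : G, exists w, word_on X w /\ word_val w = g.

Definition palindrome (X : set G) (g : G) : Prop :=
  exists w, [/\ word_on X w, reduced_word w, rev w = w & word_val w = g].

Definition prodl (s : seq G) : G := foldr (fun x acc => x * acc) 1 s.

(* l_P(g): minimal number of palindromes whose product is g (in \bar Rdefinitions.R,
   +oo if there is none) *)
Definition pal_length (X : set G) (g : G) : \bar Rdefinitions.R :=
  ereal_inf [set ((n%:R : Rdefinitions.R)%R)%:E | n in
     [set n : nat | exists ps : seq G,
        [/\ size ps = n, (forall p, p \in ps -> palindrome X p) & prodl ps = g]]].

(* pw(S, X) = sup_{h in S} l_P(h), palindromes taken in G w.r.t. X *)
Definition pal_width_on (X : set G) (S : set G) : \bar Rdefinitions.R :=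
  ereal_sup (pal_length X @` S).

Definition pal_width (X : set G) : \bar Rdefinitions.R := pal_width_on X setT.

Definition normal_subgroup (H : set G) : Prop :=
  [/\ H 1, (forall x y, H x -> H y -> H (x * y^-1))
    & (forall x g, H x -> H (g^-1 * x * g))].

End Palindromes.

(* The image under pi of a reduced palindromic word is palindromic but maybe not
   reduced; cancelling inverse letters symmetrically in both halves keeps it
   palindromic, so pi maps palindromes to palindromes and l_P(pi g) <= l_P(g).
   Conversely a reduced palindromic word over pi(X) lifts letter by letter to
   one over X.  Hence a shortest palindromic factorisation of pi g lifts to a
   product g' of as many palindromes of G with g'^-1 g in H = ker pi, and
   subadditivity of l_P gives l_P(g) <= pw(G/H) + pw(H). *)

From HB Require Import structures.
From mathcomp Require Import all_boot ssralg monoid.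
From mathcomp Require Import all_classical reals constructive_ereal ereal.
From mathcomp Require Import Rstruct order ssrnum.

Set Implicit Arguments.
Unset Strict Implicit.
Unset Printing Implicit Defensive.

Import Order.TTheory GRing.Theory Num.Theory.
Local Open Scope classical_set_scope.

Lemma size_le1_rev (T : Type) (m : seq T) : size m <= 1 -> rev m = m.
Proof. by case: m => [|x []]. Qed.

Lemma rev_eq_sym (T : Type) (w : seq T) : rev w = w ->
  exists u m, size m <= 1 /\ w = u ++ m ++ rev u.
Proof.
have [n] := ubnP (size w); elim: n w => // n IHn [|a w] ltwn revw.
  by exists [::], [::].
case/lastP: w ltwn revw => [|w b] ltwn revw; first by exists [::], [:: a].
rewrite rev_cons rev_rcons /= in revw; case: revw => <- /rcons_inj[revw].
have [|u [m [m1 ->]]] := IHn w _ revw.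
  by move: ltwn; rewrite /= size_rcons !ltnS => /ltnW.
by exists (b :: u), m; rewrite rev_cons /= !rcons_cat.
Qed.

Section Words.
Variable G : groupType.
Implicit Types (a b l c : letter G) (u w x y m : seq (letter G)).
Local Open Scope group_scope.

Definition nocancel a b : bool := ~~ ((a.1 == b.1) && (a.2 != b.2)).

Lemma nocancelC a b : nocancel a b = nocancel b a.
Proof. by case: a b => [a e] [b f]; rewrite /nocancel /= eq_sym; case: e; case: f. Qed.

Lemma nocancel_refl a : nocancel a a.
Proof. by rewrite /nocancel !eqxx. Qed.

Lemma letter_val_cancel a b : ~~ nocancel a b -> letter_val a * letter_val b = 1.
Proof.
case: a b => [a e] [b f]; rewrite negbK /= => /andP[/eqP -> ef].
by case: e f ef => [] [] //= _; rewrite ?mulVg ?mulgV.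
Qed.

Lemma word_val_cat x y : word_val (x ++ y) = word_val x * word_val y.
Proof. by elim: x => [|a x IHx] /=; rewrite ?mul1g // IHx mulgA. Qed.

Lemma word_val_cancel x a b y : ~~ nocancel a b ->
  word_val (x ++ a :: b :: y) = word_val (x ++ y).
Proof.
by move=> ab; rewrite !word_val_cat /= [letter_val a * _]mulgA letter_val_cancel // mul1g.
Qed.

Lemma word_val_sym_cancel x a b y m : ~~ nocancel a b ->
  word_val ((x ++ a :: b :: y) ++ m ++ rev (x ++ a :: b :: y)) =
  word_val ((x ++ y) ++ m ++ rev (x ++ y)).
Proof.
move=> ab; rewrite -catA /= word_val_cancel // !rev_cat !rev_cons -!cats1 -!catA.
by rewrite !catA -catA -(catA _ [:: b]) /= word_val_cancel 1?nocancelC // !catA.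
Qed.

Lemma word_val_sym_cancel_mid u l c : ~~ nocancel l c ->
  word_val (rcons u l ++ [:: c] ++ rev (rcons u l)) = word_val (u ++ [:: l] ++ rev u).
Proof. by move=> lc; rewrite rev_rcons cat_rcons /= word_val_cancel. Qed.

Lemma reduced_wordPn u : ~~ reduced_word u ->
  exists x a b y, u = x ++ a :: b :: y /\ ~~ nocancel a b.
Proof.
elim: u => [|a [|b u] IHu] //.
have -> : reduced_word [:: a, b & u] = nocancel a b && reduced_word (b :: u) by [].
case ab: (nocancel a b) => /=; last by exists [::], a, b, u; rewrite ab.
by move=> /IHu[x [c [d [y [-> cd]]]]]; exists (a :: x), c, d, y.
Qed.

Lemma reduced_word_rcons_rev u l : reduced_word (rcons u l) -> path nocancel l (rev u).
Proof.
rewrite /reduced_word -[rcons u l]revK rev_sorted rev_rcons /=.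
by apply: sub_path => a b; rewrite nocancelC.
Qed.

Lemma reduced_word_sym u l m : size m <= 1 -> reduced_word (rcons u l) ->
  path nocancel l m -> reduced_word (rcons u l ++ m ++ rev (rcons u l)).
Proof.
move=> m1 redu lm; have ul := reduced_word_rcons_rev redu.
case: m m1 lm => [|c []] //= _; rewrite rev_rcons /reduced_word cat_rcons.
  by rewrite sorted_cat_cons -/nocancel -/(reduced_word _) redu /= nocancel_refl.
by rewrite sorted_cat_cons -/nocancel -/(reduced_word _) redu /= nocancelC andbT => ->.
Qed.

Variable Y : set G.

Lemma word_on_sub w w' : {subset w <= w'} -> word_on Y w' -> word_on Y w.
Proof. by move=> ww' Yw' l /ww'/Yw'. Qed.

Lemma palindrome_sym u m : size m <= 1 -> word_on Y (u ++ m ++ rev u) ->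
  palindrome Y (word_val (u ++ m ++ rev u)).
Proof.
have [n] := ubnP (size u); elim: n u m => // n IHn u m ltun m1 Yw.
have self v : word_on Y v -> reduced_word v -> rev v = v -> palindrome Y (word_val v).
  by move=> *; exists v.
have revw : rev (u ++ m ++ rev u) = u ++ m ++ rev u.
  by rewrite !rev_cat revK size_le1_rev // catA.
case: (boolP (reduced_word u)) => [redu | /reduced_wordPn[x [a [b [y [Eu ab]]]]]].
  case/lastP: u redu ltun Yw revw => [|u l] redu ltun Yw revw.
    by apply: self => //; case: m m1 {Yw revw} => [|c []].
  case: (boolP (path nocancel l m)) => lm; first exact/self/revw/reduced_word_sym.
  case: m m1 lm {Yw revw} (Yw) => [|c []] //= _; rewrite andbT => lc Yw.
  rewrite word_val_sym_cancel_mid //; apply: IHn => //.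
    by rewrite size_rcons in ltun.
  apply: word_on_sub Yw => k; rewrite !(mem_cat, mem_rev, mem_rcons, in_cons) /=.
  by case: (k \in u) => //=; rewrite ?orbT // orbF => ->.
rewrite Eu word_val_sym_cancel //; apply: IHn => //.
  by move: ltun; rewrite Eu !size_cat /= !addnS ltnS => /ltnW.
rewrite Eu in Yw; apply: word_on_sub Yw => k.
rewrite !(mem_cat, mem_rev, in_cons) /=.
by case: (k \in x); case: (k \in y); case: (k \in m); rewrite /= ?orbT.
Qed.

Lemma palindrome_rev_word w : word_on Y w -> rev w = w -> palindrome Y (word_val w).
Proof.
move=> Yw revw; have [u [m [m1 Ew]]] := rev_eq_sym revw.
by rewrite Ew in Yw *; apply: palindrome_sym.
Qed.

End Words.

Section PalLength.
Variables (G : groupType) (X : set G).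
Local Open Scope ereal_scope.

Lemma prodl_cat (s1 s2 : seq G) : prodl (s1 ++ s2) = (prodl s1 * prodl s2)%g.
Proof. by elim: s1 => [|x s IHs] /=; rewrite ?mul1g // IHs mulgA. Qed.

Lemma pal_length_le_size (g : G) ps :
  (forall p, p \in ps -> palindrome X p) -> prodl ps = g ->
  pal_length X g <= (size ps)%:R%:E.
Proof. by move=> pal_ps psg; apply: ereal_inf_lbound; exists (size ps) => //; exists ps. Qed.

Lemma pal_length_ge0 (g : G) : 0 <= pal_length X g.
Proof. by apply: le_ereal_inf_tmp => _ [n _ <-]; rewrite lee_fin ler0n. Qed.

Lemma pal_length_infty_or_attained (g : G) :
  pal_length X g = +oo \/ exists ps, [/\ (forall p, p \in ps -> palindrome X p),
      prodl ps = g & pal_length X g = (size ps)%:R%:E].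
Proof.
pose P n := exists ps : seq G,
  [/\ size ps = n, (forall p, p \in ps -> palindrome X p) & prodl ps = g].
have [[n Pn]|noP] := pselect (exists n, P n); last first.
  left; apply/eqP; rewrite -leye_eq; apply: le_ereal_inf_tmp => _ [n Pn <-].
  by case: noP; exists n.
have exP : exists n, `[< P n >] by exists n; apply/asboolP.
right; case: (ex_minnP exP) => k /asboolP[ps [<- pal_ps psg]] kmin.
exists ps; split => //; apply/eqP; rewrite eq_le pal_length_le_size //=.
apply: le_ereal_inf_tmp => _ [j Pj <-]; rewrite lee_fin ler_nat.
exact/kmin/asboolP.
Qed.

Lemma pal_length_mul (g h : G) :
  pal_length X (g * h)%g <= pal_length X g + pal_length X h.
Proof.
have ge0_neq_ninfty x : 0 <= x -> x != -oo by case: x.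
case: (pal_length_infty_or_attained g) => [-> | [ps [pal_ps psg ->]]].
  by rewrite addye ?leey ?ge0_neq_ninfty ?pal_length_ge0.
case: (pal_length_infty_or_attained h) => [-> | [rs [pal_rs rsh ->]]].
  by rewrite addey ?leey.
rewrite -EFinD -natrD -size_cat; apply: pal_length_le_size.
  by move=> p; rewrite mem_cat => /orP[/pal_ps|/pal_rs].
by rewrite prodl_cat psg rsh.
Qed.

Lemma pal_length_le_width (S : set G) (g : G) : S g -> pal_length X g <= pal_width_on X S.
Proof. by move=> Sg; apply: ereal_sup_ubound; exists g. Qed.

End PalLength.

Section Quotient.
Variables (G Gbar : groupType) (X : set G) (pi : G -> Gbar).
Hypothesis piM : forall x y : G, pi (x * y)%g = (pi x * pi y)%g.
Local Open Scope group_scope.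

Lemma pi1 : pi 1 = 1.
Proof. by apply: (@mulIg _ (pi 1)); rewrite -piM !mul1g. Qed.

Lemma piV x : pi x^-1 = (pi x)^-1.
Proof. by apply/esym/mulg1_eq; rewrite -piM mulgV pi1. Qed.

Definition map_letter (l : letter G) : letter Gbar := (pi l.1, l.2).

Lemma word_val_map w : word_val (map map_letter w) = pi (word_val w).
Proof.
elim: w => [|[a e] w IHw] /=; first by rewrite pi1.
by rewrite IHw piM; case: e => //=; rewrite piV.
Qed.

Lemma prodl_map ps : prodl (map pi ps) = pi (prodl ps).
Proof. by elim: ps => [|p ps IHps] /=; rewrite ?pi1 // IHps piM. Qed.

Lemma palindrome_map p : palindrome X p -> palindrome (pi @` X) (pi p).
Proof.
case=> w [Xw _ revw <-]; rewrite -word_val_map; apply: palindrome_rev_word.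
  by move=> _ /mapP[l wl ->]; exists l.1 => //; apply: Xw.
by rewrite -map_rev revw.
Qed.

Lemma pal_length_map g : (pal_length (pi @` X) (pi g) <= pal_length X g)%E.
Proof.
apply: le_ereal_inf_tmp => _ [n [ps [<- pal_ps psg]] <-].
rewrite -(size_map pi); apply: pal_length_le_size; last by rewrite prodl_map psg.
by move=> _ /mapP[p ps_p ->]; apply/palindrome_map/pal_ps.
Qed.

Section Lift.
Variable f : Gbar -> G.
Hypotheses (fK : cancel f pi) (fX : forall z, (pi @` X) z -> X (f z)).

Definition lift_letter (l : letter Gbar) : letter G := (f l.1, l.2).

Lemma lift_letterK : cancel lift_letter map_letter.
Proof. by case=> z e; rewrite /map_letter /= fK. Qed.

Lemma palindrome_lift q : palindrome (pi @` X) q ->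
  exists2 p, palindrome X p & pi p = q.
Proof.
case=> w [Yw redw revw <-]; exists (word_val (map lift_letter w)); last first.
  by rewrite -word_val_map -map_comp (eq_map lift_letterK) map_id.
exists (map lift_letter w); split => //.
- by move=> _ /mapP[l wl ->]; apply/fX/Yw.
- rewrite /reduced_word sorted_map; apply: sub_sorted redw => a b /=.
  by apply: contra => /andP[/eqP/(congr1 pi)]; rewrite !fK => -> ->; rewrite eqxx.
- by rewrite -map_rev revw.
Qed.

Lemma palindromes_lift qs : (forall q, q \in qs -> palindrome (pi @` X) q) ->
  exists ps, [/\ size ps = size qs, (forall p, p \in ps -> palindrome X p) &
              pi (prodl ps) = prodl qs].
Proof.
elim: qs => [|q qs IHqs] pal_qs; first by exists [::]; split; rewrite ?pi1.
have [|ps [size_ps pal_ps psqs]] := IHqs.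
  by move=> q' qs_q'; apply: pal_qs; rewrite inE qs_q' orbT.
have [p pal_p <-] := palindrome_lift (pal_qs q (mem_head _ _)).
exists (p :: ps); split => /=; [by rewrite size_ps | | by rewrite piM psqs].
by move=> p'; rewrite inE => /orP[/eqP ->|/pal_ps].
Qed.

Lemma pal_length_lift z : exists g,
  pi g = z /\ (pal_length X g <= pal_length (pi @` X) z)%E.
Proof.
case: (pal_length_infty_or_attained (pi @` X) z) => [-> | [qs [pal_qs qsz ->]]].
  by exists (f z); rewrite fK leey.
have [ps [<- pal_ps psqs]] := palindromes_lift pal_qs.
by exists (prodl ps); rewrite psqs qsz; split => //; apply: pal_length_le_size.
Qed.

End Lift.

Lemma quotient_section : (forall z, exists g, pi g = z) ->
  exists2 f : Gbar -> G, cancel f pi & forall z, (pi @` X) z -> X (f z).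
Proof.
move=> pi_surj; have lift z : exists g, pi g = z /\ ((pi @` X) z -> X g).
  have [[x Xx <-]|notYz] := pselect ((pi @` X) z); first by exists x.
  by have [g gz] := pi_surj z; exists g; split => // /notYz.
by have [f fP] := boolp.choice lift; exists f => z; have [] := fP z.
Qed.

End Quotient.

Local Open Scope ereal_scope.

Theorem lemma2p6 (G Gbar : groupType) (X H : set G) (pi : G -> Gbar) :
  generates X ->
  normal_subgroup H ->
  (forall x y : G, pi (x * y)%g = (pi x * pi y)%g) ->
  (forall z : Gbar, exists g : G, pi g = z) ->
  (forall g : G, pi g = 1%g <-> H g) ->
  pal_width (pi @` X) <= pal_width X /\
  pal_width X <= pal_width (pi @` X) + pal_width_on X H.
Proof.
move=> _ _ piM pi_surj kerH; have [f fK fX] := quotient_section X pi_surj.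
split.
  apply: ge_ereal_sup => _ [z _ <-]; have [g <-] := pi_surj z.
  exact: le_trans (pal_length_map X piM g) (pal_length_le_width _ _).
apply: ge_ereal_sup => _ [g _ <-].
have [g' [pig' g'_len]] := pal_length_lift piM fK fX (pi g).
have Hh : H (g'^-1 * g)%g by apply/kerH; rewrite piM piV // pig' mulVg.
rewrite -(mulVKg g' g); apply: le_trans (pal_length_mul _ _ _) _.
apply: leeD; last exact: pal_length_le_width.
exact: le_trans g'_len (pal_length_le_width _ _).
Qed.
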